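(* Let $n\ge 2$, let $M_1,\ldots,M_k\in\mathrm{H}(n,\mathbb{Q}(\mathrm{i}))$ be such that $M_1M_2\cdots M_k\in\Omega$, and let $\ell\ge1$ be an integer. Write $\psi(M_i)=(\boldsymbol{a}_i,\boldsymbol{b}_i,c_i)$. Consider the word consisting of $\ell$ occurrences of each index $i\in\{1,\ldots,k\}$ arranged in some order (a shuffle of $M_1^\ell M_2^\ell\cdots M_k^\ell$ by a permutation $\sigma$ of its $k\ell$ factors), and let $M$ be the corresponding product. For $i\ne j$ let $z_{ji}$ be the number of pairs (occurrence of $M_j$, occurrence of $M_i$) in this word in which the occurrence of $M_j$ is to the left of the occurrence of $M_i$. Then \[M_{1,n}=\ell\sum_{i=1}^k\Big(c_i-\tfrac12\boldsymbol{a}_i^T\boldsymbol{b}_i\Big)+\frac{\ell^2}{2}\sum_{1\le i<j\le k-1}[M_i,M_j]-\sum_{1\le i<j\le k}z_{ji}[M_i,M_j].\]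
   Context: $\mathbb{Q}(\mathrm{i})=\{a+b\mathrm{i}\mid a,b\in\mathbb{Q}\}$. $\mathrm{H}(n,\mathbb{Q}(\mathrm{i}))$ is the set of $n\times n$ matrices $M=\begin{pmatrix}1&\boldsymbol{m}_1^T&m_3\\ \boldsymbol{0}&\boldsymbol{I}_{n-2}&\boldsymbol{m}_2\\ 0&\boldsymbol{0}^T&1\end{pmatrix}$ with $\boldsymbol{m}_1,\boldsymbol{m}_2\in\mathbb{Q}(\mathrm{i})^{n-2}$, $m_3\in\mathbb{Q}(\mathrm{i})$, and $\psi(M)=(\boldsymbol{m}_1,\boldsymbol{m}_2,m_3)$. $\Omega$ is the set of such matrices with $\boldsymbol{m}_1=\boldsymbol{m}_2=\boldsymbol{0}$. $X_{1,n}$ is the top-right entry of $X$. The commutator is the scalar $[M_i,M_j]=\boldsymbol{a}_i^T\boldsymbol{b}_j-\boldsymbol{a}_j^T\boldsymbol{b}_i\in\mathbb{Q}(\mathrm{i})$ where $\psi(M_i)=(\boldsymbol{a}_i,\boldsymbol{b}_i,c_i)$, $\psi(M_j)=(\boldsymbol{a}_j,\boldsymbol{b}_j,c_j)$. *)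

From HB Require Import structures.
From mathcomp Require Import all_boot all_order all_algebra all_field.
Set Implicit Arguments. Unset Strict Implicit. Unset Printing Implicit Defensive.
Import Order.TTheory GRing.Theory Num.Theory.
Local Open Scope ring_scope.

Definition gaussQ (x : algC) : Prop :=
  exists p q : rat, x = ratr p + ratr q * 'i.

Definition cV_gaussQ m (v : 'cV[algC]_m) : Prop := forall t, gaussQ (v t 0).

(* value of the t-th entry (0-based) of a column vector, 0 if out of range *)
Definition vget m (v : 'cV[algC]_m) (t : nat) : algC :=
  if insub t is Some o then v o 0 else 0.

(* The matrix of H(n, .) with psi(M) = (m1, m2, m3):
   [[1, m1^T, m3], [0, I_{n-2}, m2], [0, 0^T, 1]]   (indices 0-based) *)
Definition mkH n (m1 m2 : 'cV[algC]_(n - 2)) (m3 : algC) : 'M[algC]_n :=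
  \matrix_(i < n, j < n)
    if i == j :> nat then 1
    else if (val i == 0%N) && (val j == n.-1) then m3
    else if (val i == 0%N) && (0 < j < n.-1)%N then vget m1 j.-1
    else if (0 < i < n.-1)%N && (val j == n.-1) then vget m2 i.-1
    else 0.

Definition topright n : 'M[algC]_n -> algC :=
  match n return 'M[algC]_n -> algC with
  | 0 => fun _ => 0
  | m.+1 => fun X => X ord0 ord_max
  end.

Definition commH m (ai bi aj bj : 'cV[algC]_m) : algC :=
  \sum_(t < m) (ai t 0 * bj t 0) - \sum_(t < m) (aj t 0 * bi t 0).

Definition wprod n k (M : 'I_k -> 'M[algC]_n) (w : seq 'I_k) : 'M[algC]_n :=
  \big[@mulmx _ n n n/1%:M]_(i <- w) M i.

Definition zcount k (w : seq 'I_k) (j i : 'I_k) : nat :=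
  \sum_(p < size w) \sum_(q < size w)
     [&& (p < q)%N, nth j w p == j & nth j w q == i].

Definition blockword k (l : nat) : seq 'I_k :=
  flatten [seq nseq l i | i <- enum 'I_k].

(* Write mkH a b c = 1 + N(a, b, c), where N is supported on the first row and
   the last column; then N(a, b, c) N(a', b', c') = N(0, 0, a^T b'), so H(n)
   multiplies as (a, b, c)(a', b', c') = (a + a', b + b', c + c' + a^T b').
   A word w thus multiplies to (sum a, sum b, sum c + sum_(i,j) z_ij a_i^T b_j),
   z_ij counting occurrences of i before occurrences of j (also for i = j).
   For M_1 ... M_k in Omega this gives sum_i a_i = sum_i b_i = 0, so
   D_ij = a_i^T b_j has vanishing row and column sums.  For a shuffle of
   M_1^l ... M_k^l, z_ij + z_ji = l^2 and 2 z_ii = l (l - 1); pairing the terms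
   (i, j) and (j, i) and using sum_(i,j) D_ij = 0 gives the formula, in which
   the terms with j = k cancel by the same margin conditions. *)

From HB Require Import structures.
From mathcomp Require Import all_boot all_order all_algebra all_field zify ring.
Import Order.TTheory GRing.Theory Num.Theory.
Set Implicit Arguments. Unset Strict Implicit. Unset Printing Implicit Defensive.
Local Open Scope ring_scope.

Definition cvdot (R : pzSemiRingType) m (u v : 'cV[R]_m) : R :=
  \sum_(t < m) u t 0 * v t 0.

Section DotProduct.
Variables (R : pzSemiRingType) (m : nat).
Implicit Types (u v : 'cV[R]_m).

Lemma cvdot0r u : cvdot u 0 = 0.
Proof. by rewrite /cvdot big1 // => t _; rewrite mxE mulr0. Qed.

Lemma cvdot0l v : cvdot 0 v = 0.
Proof. by rewrite /cvdot big1 // => t _; rewrite mxE mul0r. Qed.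

Lemma cvdot_sumr (I : Type) (r : seq I) (P : pred I) u (v : I -> 'cV[R]_m) :
  \sum_(i <- r | P i) cvdot u (v i) = cvdot u (\sum_(i <- r | P i) v i).
Proof.
by rewrite /cvdot exchange_big; apply: eq_bigr => t _; rewrite summxE mulr_sumr.
Qed.

Lemma cvdot_suml (I : Type) (r : seq I) (P : pred I) (u : I -> 'cV[R]_m) v :
  \sum_(i <- r | P i) cvdot (u i) v = cvdot (\sum_(i <- r | P i) u i) v.
Proof.
by rewrite /cvdot exchange_big; apply: eq_bigr => t _; rewrite summxE mulr_suml.
Qed.

End DotProduct.

Lemma vgetD m (u v : 'cV[algC]_m) t : vget (u + v) t = vget u t + vget v t.
Proof. by rewrite /vget; case: insub => [o|]; rewrite ?mxE ?addr0. Qed.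

Lemma vget0 m t : vget (0 : 'cV[algC]_m) t = 0.
Proof. by rewrite /vget; case: insub => [o|]; rewrite ?mxE. Qed.

Lemma vgetE m (u : 'cV[algC]_m) (t : 'I_m) : vget u t = u t 0.
Proof. by rewrite /vget valK. Qed.

Section HeisenbergMatrices.
Variable n : nat.
Hypothesis n_ge2 : (2 <= n)%N.
Implicit Types (a b : 'cV[algC]_(n - 2)) (c : algC).

Lemma sum_interior (R : nmodType) (F : nat -> R) :
  \sum_(t < n) (if (0 < t < n.-1)%N then F t.-1 else 0) = \sum_(s < n - 2) F s.
Proof.
case: n n_ge2 => [|[|n']] // _; rewrite subn2 /=.
rewrite -(big_mkord xpredT (fun t => if (0 < t < n'.+1)%N then F t.-1 else 0)).
rewrite -(big_mkord xpredT F) big_nat_recl // big_nat_recr //= ltnn add0r addr0.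
by apply: eq_big_nat => s /andP[_ s_lt]; rewrite ltnS s_lt.
Qed.

Definition nilH_coef a b c (i j : nat) : algC :=
  if (i == 0%N) && (j == n.-1) then c
  else if (i == 0%N) && (0 < j < n.-1)%N then vget a j.-1
  else if (0 < i < n.-1)%N && (j == n.-1) then vget b i.-1
  else 0.

Definition nilH a b c : 'M[algC]_n := \matrix_(i, j) nilH_coef a b c i j.

Lemma mkH_nilH a b c : mkH a b c = 1%:M + nilH a b c.
Proof.
apply/matrixP => i j; rewrite !mxE /nilH_coef.
have [<-|ij] := eqVneq i j; last by rewrite add0r ifN.
rewrite eqxx mulr1n; have [->|i_neq0] := eqVneq (i : nat) 0%N.
  by rewrite ifN ?addr0 //; lia.
by case: ifP => [/andP[/andP[_ ?] /eqP ?]|_]; [lia | rewrite addr0].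
Qed.

Lemma nilHD a b c a' b' c' :
  nilH a b c + nilH a' b' c' = nilH (a + a') (b + b') (c + c').
Proof.
apply/matrixP => i j; rewrite !mxE /nilH_coef.
by repeat case: ifP => _; rewrite ?vgetD ?addr0.
Qed.

Lemma nilH_coefM a1 b1 c1 a2 b2 c2 i t j :
  nilH_coef a1 b1 c1 i t * nilH_coef a2 b2 c2 t j =
  if [&& i == 0%N, j == n.-1 & (0 < t < n.-1)%N]
  then vget a1 t.-1 * vget b2 t.-1 else 0.
Proof.
by rewrite /nilH_coef; repeat case: ifP => ?; rewrite ?mul0r ?mulr0 //; lia.
Qed.

Lemma nilHM a1 b1 c1 a2 b2 c2 :
  nilH a1 b1 c1 *m nilH a2 b2 c2 = nilH 0 0 (cvdot a1 b2).
Proof.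
apply/matrixP => i j; rewrite !mxE.
under eq_bigr => t _ do rewrite !mxE nilH_coefM.
rewrite /nilH_coef !vget0; case: ifP => [/andP[-> ->] /= | ij_corner].
  rewrite (sum_interior (fun s => vget a1 s * vget b2 s)).
  by apply: eq_bigr => s _; rewrite !vgetE.
by rewrite big1 => [|t _]; [repeat case: ifP | rewrite andbA ij_corner].
Qed.

Lemma mkHM a1 b1 c1 a2 b2 c2 :
  mkH a1 b1 c1 *m mkH a2 b2 c2 =
  mkH (a1 + a2) (b1 + b2) (c1 + c2 + cvdot a1 b2).
Proof.
rewrite !mkH_nilH mulmxDl !mulmxDr !mul1mx mulmx1 nilHM.
by rewrite nilHD -addrA (addrC (nilH a2 b2 c2)) nilHD !addr0 addrAC.
Qed.

Lemma mkH1 : mkH (0 : 'cV_(n - 2)) 0 0 = 1%:M.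
Proof.
rewrite mkH_nilH; apply/matrixP => i j; rewrite !mxE /nilH_coef !vget0.
by repeat case: ifP => _; rewrite addr0.
Qed.

Lemma topright_mkH a b c : topright (mkH a b c) = c.
Proof. by case: n n_ge2 a b => [|[|n']] // _ a b; rewrite /topright mxE /= !eqxx. Qed.

Lemma mkH_row0E a b c (i j : 'I_n) (t : 'I_(n - 2)) :
  i = 0%N :> nat -> j = t.+1 :> nat -> mkH a b c i j = a t 0.
Proof.
case: i j => [i ?] [j ?] /= i_eq j_eq; have t_lt := ltn_ord t.
rewrite mxE /= i_eq j_eq -vgetE /= ifN ?ifT //; lia.
Qed.

Lemma mkH_lastcolE a b c (i j : 'I_n) (t : 'I_(n - 2)) :
  i = t.+1 :> nat -> j = n.-1 :> nat -> mkH a b c i j = b t 0.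
Proof.
case: i j => [i ?] [j ?] /= i_eq j_eq; have t_lt := ltn_ord t.
rewrite mxE /= i_eq j_eq -vgetE /= ifN ?ifT //; lia.
Qed.

Lemma mkH_inj a b c a' b' c' :
  mkH a b c = mkH a' b' c' -> [/\ a = a', b = b' & c = c'].
Proof.
move=> eqH; split; last by rewrite -(topright_mkH a b c) eqH topright_mkH.
- apply/matrixP => t z; rewrite (ord1 z).
  have t_lt := ltn_ord t; have lt0n : (0 < n)%N by lia.
  have ltSn : (t.+1 < n)%N by lia.
  rewrite -(@mkH_row0E a b c (Ordinal lt0n) (Ordinal ltSn)) // eqH.
  exact: mkH_row0E.
- apply/matrixP => t z; rewrite (ord1 z).
  have t_lt := ltn_ord t; have ltpn : (n.-1 < n)%N by lia.
  have ltSn : (t.+1 < n)%N by lia.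
  rewrite -(@mkH_lastcolE a b c (Ordinal ltSn) (Ordinal ltpn)) // eqH.
  exact: mkH_lastcolE.
Qed.

End HeisenbergMatrices.

Lemma sum_nth_eq_count (T : eqType) (x0 : T) (s : seq T) (y : T) :
  (\sum_(q < size s) (nth x0 s q == y))%N = count_mem y s.
Proof. by elim: s => [|x s IHs]; rewrite ?big_ord0 // big_ord_recl /= IHs. Qed.

Lemma sum_count_mem (T : finType) (R : pzSemiRingType) (s : seq T) (F : T -> R) :
  \sum_x (count_mem x s)%:R * F x = \sum_(y <- s) F y.
Proof.
elim: s => [|y s IHs]; first by rewrite big_nil big1 // => x _; rewrite mul0r.
rewrite big_cons -IHs /=.
under eq_bigr => x _ do rewrite natrD mulrDl.
rewrite big_split /= (bigD1 y) //= eqxx mul1r big1 ?addr0 // => x /negbTE.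
by rewrite eq_sym => ->; rewrite mul0r.
Qed.

Section WordCounts.
Variable k : nat.
Implicit Types (w : seq 'I_k) (i j x : 'I_k).

Lemma zcount_nil i j : zcount [::] i j = 0%N.
Proof. by rewrite /zcount big_ord0. Qed.

Lemma zcount_cons x w i j :
  zcount (x :: w) i j = (zcount w i j + (x == i) * count_mem j w)%N.
Proof.
rewrite /zcount /= big_ord_recl /= big_ord_recl /= add0n addnC.
under eq_bigr => q _ do rewrite add0n.
congr (_ + _)%N; last case: (x == i); rewrite /= ?mul1n ?mul0n.
- apply: eq_bigr => p _.
  by rewrite big_ord_recl /= add0n; apply: eq_bigr => q _; rewrite /bump /= add1n ltnS.
- by rewrite -(sum_nth_eq_count i); apply: eq_bigr => q _; rewrite add0n.
- by rewrite big1.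
Qed.

Lemma zcount_swapD w i j : i != j ->
  (zcount w i j + zcount w j i = count_mem i w * count_mem j w)%N.
Proof.
move=> neq_ij; elim: w => [|x w IHw]; first by rewrite !zcount_nil.
rewrite !zcount_cons /=; have [->|_] := eqVneq x i.
  by rewrite (negbTE neq_ij) /= mul1n mul0n addn0 add0n mulnDl mul1n -IHw; lia.
by case: eqP => _; rewrite /= ?mul1n ?mul0n ?addn0 ?add0n ?mulnDr ?muln1 -IHw; lia.
Qed.

Lemma zcount_diag w i : (2 * zcount w i i + count_mem i w = count_mem i w ^ 2)%N.
Proof.
elim: w => [|x w IHw]; first by rewrite zcount_nil.
rewrite zcount_cons /=.
by have [_|_] := eqVneq x i; rewrite /= -!mulnn in IHw *; nia.
Qed.

Lemma count_blockword l i : count_mem i (blockword k l) = l.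
Proof.
rewrite count_flatten sumnE !big_map -enumT big_enum /=.
under eq_bigr => j _ do rewrite count_nseq /=.
rewrite (bigD1 i) //= eqxx mul1n big1 ?addn0 // => j /negbTE.
by rewrite eq_sym => ->.
Qed.

Lemma sum_zcount_cons (R : pzSemiRingType) x w (D : 'I_k -> 'I_k -> R) :
  \sum_i \sum_j (zcount (x :: w) i j)%:R * D i j =
  \sum_i \sum_j (zcount w i j)%:R * D i j + \sum_(y <- w) D x y.
Proof.
under eq_bigr => i _ do under eq_bigr => j _ do rewrite zcount_cons natrD mulrDl.
under eq_bigr => i _ do rewrite big_split /=.
rewrite big_split /=; congr (_ + _).
rewrite (bigD1 x) //= [X in _ + X]big1 ?addr0.
  by rewrite -(sum_count_mem w); apply: eq_bigr => j _; rewrite eqxx mul1n.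
move=> i /negbTE; rewrite eq_sym => ->.
by rewrite big1 // => j _; rewrite mul0n mul0r.
Qed.

End WordCounts.

Lemma wprod_mkH n k (n_ge2 : (2 <= n)%N) (M : 'I_k -> 'M[algC]_n)
    (a b : 'I_k -> 'cV[algC]_(n - 2)) (c : 'I_k -> algC) :
    (forall i, M i = mkH (a i) (b i) (c i)) ->
  forall w, wprod M w =
    mkH (\sum_(x <- w) a x) (\sum_(x <- w) b x)
        (\sum_(x <- w) c x + \sum_i \sum_j (zcount w i j)%:R * cvdot (a i) (b j)).
Proof.
move=> Mdef; elim=> [|x w IHw].
  rewrite /wprod !big_nil add0r big1 ?(mkH1 n_ge2) // => i _.
  by rewrite big1 // => j _; rewrite zcount_nil mul0r.
rewrite /wprod big_cons -/(wprod M w) IHw Mdef (mkHM n_ge2) sum_zcount_cons !big_cons.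
by rewrite cvdot_sumr; congr mkH; ring.
Qed.

Lemma sum_pairs_split (R : nmodType) k (F : 'I_k -> 'I_k -> R) :
  \sum_(i < k) \sum_(j < k) F i j =
  \sum_(i < k) F i i + \sum_(i < k) \sum_(j < k | (i < j)%N) (F i j + F j i).
Proof.
have split_row (i : 'I_k) : \sum_(j < k) F i j =
    F i i + (\sum_(j < k | (i < j)%N) F i j + \sum_(j < k | (j < i)%N) F i j).
  rewrite (bigD1 i) //= (bigID (fun j : 'I_k => (i < j)%N)) /=.
  by congr (_ + (_ + _)); apply: eq_bigl => j; rewrite -(inj_eq val_inj) /=; lia.
under eq_bigr do rewrite split_row.
under [X in _ = _ + X]eq_bigr do rewrite big_split.
rewrite !big_split /=; congr (_ + (_ + _)).
under eq_bigr => i _ do rewrite big_mkcond.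
by rewrite exchange_big; apply: eq_bigr => i _; rewrite [RHS]big_mkcond.
Qed.

Lemma sum_skew_upper_droplast (R : zmodType) k (D : 'I_k -> 'I_k -> R) :
    (forall i, \sum_(j < k) D i j = 0) -> (forall j, \sum_(i < k) D i j = 0) ->
  \sum_(i < k) \sum_(j < k | (i < j)%N && (j < k.-1)%N) (D i j - D j i) =
  \sum_(i < k) \sum_(j < k | (i < j)%N) (D i j - D j i).
Proof.
case: k D => [|k] D row0 col0; first by rewrite !big_ord0.
have split_last (i : 'I_k.+1) : \sum_(j < k.+1 | (i < j)%N) (D i j - D j i) =
    \sum_(j < k.+1 | (i < j)%N && (j < k)%N) (D i j - D j i) +
    (if (i < k)%N then D i ord_max - D ord_max i else 0).
  rewrite big_mkcond [in RHS]big_mkcond !big_ord_recr /= ltnn andbF addr0.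
  by congr (_ + _); apply: eq_bigr => j _; rewrite ltn_ord andbT.
under [RHS]eq_bigr do rewrite split_last.
rewrite big_split /= [X in _ = _ + X]big_ord_recr /= ltnn addr0.
under [X in _ = _ + X]eq_bigr do rewrite ltn_ord.
have row_last := row0 ord_max; have col_last := col0 ord_max.
rewrite big_ord_recr /= in row_last; rewrite big_ord_recr /= in col_last.
rewrite sumrB [X in _ - X](canRL (addrK _) row_last) (canRL (addrK _) col_last).
by rewrite subrr addr0.
Qed.

Lemma sum_pair_weights (R : numFieldType) k (l : nat) (D N : 'I_k -> 'I_k -> R) :
    (forall i, \sum_(j < k) D i j = 0) -> (forall j, \sum_(i < k) D i j = 0) ->
    (forall i j, i != j -> N i j + N j i = (l ^ 2)%:R) ->
    (forall i, 2 * N i i + l%:R = (l ^ 2)%:R) ->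
  \sum_(i < k) \sum_(j < k) N i j * D i j =
    - (l%:R / 2) * \sum_(i < k) D i i
    + (l ^ 2)%:R / 2 * \sum_(i < k) \sum_(j < k | (i < j)%N && (j < k.-1)%N) (D i j - D j i)
    - \sum_(i < k) \sum_(j < k | (i < j)%N) N j i * (D i j - D j i).
Proof.
move=> row0 col0 N_pair N_diag.
rewrite sum_skew_upper_droplast // sum_pairs_split.
set U := \sum_(i < k) \sum_(j < k | (i < j)%N) D i j.
set L := \sum_(i < k) \sum_(j < k | (i < j)%N) D j i.
set Z := \sum_(i < k) \sum_(j < k | (i < j)%N) N j i * (D i j - D j i).
have diag_sum : \sum_(i < k) D i i = - (U + L).
  have -> : U + L = \sum_(i < k) \sum_(j < k | (i < j)%N) (D i j + D j i).
    by rewrite -big_split; apply: eq_bigr => i _; rewrite big_split.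
  by apply/eqP; rewrite -addr_eq0 -sum_pairs_split; apply/eqP/big1.
have skew_sum : \sum_(i < k) \sum_(j < k | (i < j)%N) (D i j - D j i) = U - L.
  by rewrite -sumrB; apply: eq_bigr => i _; rewrite sumrB.
have diag_term (i : 'I_k) : N i i * D i i = ((l ^ 2)%:R - l%:R) / 2 * D i i.
  by rewrite -(N_diag i) addrK (mulrC 2) mulfK ?pnatr_eq0.
have pair_term (i j : 'I_k) : (i < j)%N ->
    N i j * D i j + N j i * D j i = (l ^ 2)%:R * D i j - N j i * (D i j - D j i).
  move=> lt_ij; have neq_ij : i != j by apply: contraTneq lt_ij => ->; rewrite ltnn.
  by rewrite -(N_pair i j neq_ij); ring.
have pair_sum : \sum_(i < k) \sum_(j < k | (i < j)%N) (N i j * D i j + N j i * D j i)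
    = (l ^ 2)%:R * U - Z.
  rewrite mulr_sumr -sumrB; apply: eq_bigr => i _.
  by rewrite mulr_sumr -sumrB; apply: eq_bigr => j; apply: pair_term.
under eq_bigr do rewrite diag_term.
by rewrite pair_sum -mulr_sumr diag_sum skew_sum; field.
Qed.

Theorem lemma4 (n k l : nat) (hn : (2 <= n)%N) (hl : (1 <= l)%N)
  (M : 'I_k -> 'M[algC]_n)
  (a b : 'I_k -> 'cV[algC]_(n - 2)) (c : 'I_k -> algC)
  (hQa : forall i, cV_gaussQ (a i)) (hQb : forall i, cV_gaussQ (b i))
  (hQc : forall i, gaussQ (c i))
  (hpsi : forall i, M i = mkH (a i) (b i) (c i))
  (hOmega : exists c0 : algC, gaussQ c0 /\
     wprod M (enum 'I_k) = mkH 0 0 c0)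
  (w : seq 'I_k) (hw : perm_eq w (blockword k l)) :
  topright (wprod M w) =
    l%:R * (\sum_(i < k) (c i - 2^-1 * \sum_(t < n - 2) (a i t 0 * b i t 0)))
    + (l ^ 2)%:R / 2 *
        (\sum_(i < k) \sum_(j < k | (i < j)%N && (j < k.-1)%N)
            commH (a i) (b i) (a j) (b j))
    - \sum_(i < k) \sum_(j < k | (i < j)%N)
        (zcount w j i)%:R * commH (a i) (b i) (a j) (b j).
Proof.
have count_w i : count_mem i w = l by rewrite (permP hw) count_blockword.
have [c0 [_ prod_Omega]] := hOmega.
rewrite (wprod_mkH hn hpsi) !big_enum /= in prod_Omega.
have [sum_a0 sum_b0 _] := mkH_inj hn prod_Omega.
have row0 i : \sum_j cvdot (a i) (b j) = 0 by rewrite cvdot_sumr sum_b0 cvdot0r.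
have col0 j : \sum_i cvdot (a i) (b j) = 0 by rewrite cvdot_suml sum_a0 cvdot0l.
have z_pair i j : i != j ->
    (zcount w i j)%:R + (zcount w j i)%:R = (l ^ 2)%:R :> algC.
  by move=> neq_ij; rewrite -natrD zcount_swapD // !count_w mulnn.
have z_diag i : 2 * (zcount w i i)%:R + l%:R = (l ^ 2)%:R :> algC.
  by rewrite -natrM -natrD -(count_w i) zcount_diag.
rewrite (wprod_mkH hn hpsi) (topright_mkH hn) (sum_pair_weights row0 col0 z_pair z_diag).
rewrite -sum_count_mem; under eq_bigr do rewrite count_w.
by rewrite /commH /cvdot sumrB -!mulr_sumr; ring.
Qed.
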